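(* Let $K=\mathrm{SU}(2)$, $\mathcal{M}=\{(g_1,h_1,g_2,h_2)\in K^4:[g_1,h_1][g_2,h_2]=I\}/K$, $\mathcal{M}^i$ the set of classes of non-abelian quadruples, and $\mathcal{M}^\circ=\mu^{-1}(\tilde\Delta^\circ)$. Then $\mathcal{M}^\circ\subsetneq\mathcal{M}^i$.
   Context: $[a,b]=aba^{-1}b^{-1}$; $K$ acts by simultaneous conjugation and $[g_1;h_1;g_2;h_2]$ denotes a class. A quadruple is abelian if its entries pairwise commute. For $a\in K$ let $f(a)=\frac1\pi\arccos(\mathrm{tr}(a)/2)$; $\mu:\mathcal{M}\to\mathbb{R}^3$, $\mu([g_1;h_1;g_2;h_2])=(f(h_1),f(h_2),f(h_1h_2))$. $\tilde\Delta$ is the tetrahedron with vertices $(0,0,0),(0,1,1),(1,0,1),(1,1,0)$ and $\tilde\Delta^\circ$ its interior. *)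

From HB Require Import structures.
From mathcomp Require Import all_boot all_order all_algebra.
From mathcomp Require Import all_classical all_reals all_analysis.
From mathcomp Require Import complex.
Set Implicit Arguments. Unset Strict Implicit. Unset Printing Implicit Defensive.
Import Order.TTheory GRing.Theory Num.Theory.
Import numFieldNormedType.Exports.
Local Open Scope classical_set_scope.
Local Open Scope ring_scope.

Section SU2Defs.
Variable R : realType.

Definition mat2 := 'M[R[i]]_2.

Definition adj2 (A : mat2) : mat2 := (map_mx (@conjc R) A)^T.

Definition SU2 : set mat2 := [set A | A *m adj2 A = 1%:M /\ \det A = 1].

Definition comm2 (a b : mat2) : mat2 := a * b * a^-1 * b^-1.

Definition quad := (mat2 * mat2 * mat2 * mat2)%type.

Definition qg1 (q : quad) := q.1.1.1.
Definition qh1 (q : quad) := q.1.1.2.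
Definition qg2 (q : quad) := q.1.2.
Definition qh2 (q : quad) := q.2.

Definition Rel : set quad := [set q |
  [/\ SU2 (qg1 q), SU2 (qh1 q), SU2 (qg2 q), SU2 (qh2 q)
    & comm2 (qg1 q) (qh1 q) * comm2 (qg2 q) (qh2 q) = 1]].

Definition conjq (k : mat2) (q : quad) : quad :=
  (k * qg1 q * k^-1, k * qh1 q * k^-1, k * qg2 q * k^-1, k * qh2 q * k^-1).

Definition qclass (q : quad) : set quad :=
  [set q' | exists k, SU2 k /\ q' = conjq k q].

Definition Mspace : set (set quad) := [set c | exists q, Rel q /\ c = qclass q].

Definition abelianq (q : quad) : Prop :=
  let s := [:: qg1 q; qh1 q; qg2 q; qh2 q] in
  forall i j : 'I_4, nth 0 s i * nth 0 s j = nth 0 s j * nth 0 s i.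

Definition Mirr : set (set quad) :=
  [set c | exists q, [/\ Rel q, ~ abelianq q & c = qclass q]].

(* f(a) = arccos(tr(a)/2)/pi  (tr a is real for a in SU(2); we take Re) *)
Definition fSU2 (a : mat2) : R := acos (complex.Re (\tr a) / 2) / pi.

(* mu on representatives; it is conjugation invariant *)
Definition muq (q : quad) : 'rV[R]_3 :=
  \row_(i < 3) nth 0 [:: fSU2 (qh1 q); fSU2 (qh2 q); fSU2 (qh1 q * qh2 q)] i.

Definition pt3 (x y z : R) : 'rV[R]_3 := \row_(i < 3) nth 0 [:: x; y; z] i.

Definition tvert (i : 'I_4) : 'rV[R]_3 :=
  nth 0 [:: pt3 0 0 0; pt3 0 1 1; pt3 1 0 1; pt3 1 1 0] i.

Definition tDelta : set 'rV[R]_3 :=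
  [set x | exists l : 'I_4 -> R,
     [/\ forall i, 0 <= l i, \sum_(i < 4) l i = 1 & x = \sum_(i < 4) l i *: tvert i]].

Definition Mcirc : set (set quad) :=
  [set c | exists q, [/\ Rel q, c = qclass q & interior tDelta (muq q)]].

End SU2Defs.

From HB Require Import structures.
From mathcomp Require Import all_boot all_order all_algebra.
From mathcomp Require Import all_classical all_reals all_analysis.
From mathcomp Require Import complex.
From mathcomp Require Import ring lra.
Set Implicit Arguments. Unset Strict Implicit. Unset Printing Implicit Defensive.
Import Order.TTheory GRing.Theory Num.Theory.
Import numFieldNormedType.Exports.
Local Open Scope classical_set_scope.
Local Open Scope ring_scope.

(* Elements of SU(2) are unit quaternions, and two of them commute exactly when
   their imaginary parts are parallel.  If h1 and h2 commute and have angles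
   a = arccos(tr h1 / 2), b = arccos(tr h2 / 2), then tr (h1 h2) / 2 is
   cos (a - b) or cos (a + b), so the third coordinate of pi mu is |a - b|,
   a + b or 2 pi - (a + b): mu lies on a facet plane of the tetrahedron, not in
   its interior.  The inclusion is strict because the non-abelian quadruple
   (i, 1, j, 1) is mapped by mu to the vertex 0. *)

Section SU2Quaternions.
Variable R : realType.
Local Open Scope complex_scope.

Definition mx22 (a b c d : R[i]) : mat2 R :=
  \matrix_(i < 2, j < 2) if i == 0 then (if j == 0 then a else b)
                         else (if j == 0 then c else d).

Lemma mx22_eta (A : mat2 R) : A = mx22 (A 0 0) (A 0 1) (A 1 0) (A 1 1).
Proof.
apply/matrixP => i j; rewrite mxE.
by case: i => -[|[|i]] Hi //; case: j => -[|[|j]] Hj //=; congr (A _ _); apply/val_inj.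
Qed.

Lemma mx22_inj a b c d a' b' c' d' :
  mx22 a b c d = mx22 a' b' c' d' -> [/\ a = a', b = b', c = c' & d = d'].
Proof.
move=> eq_mx; have entry i j := congr1 (fun M : mat2 R => M i j) eq_mx.
by move: (entry 0 0) (entry 0 1) (entry 1 0) (entry 1 1); rewrite !mxE.
Qed.

Lemma mx22M a b c d a' b' c' d' :
  mx22 a b c d * mx22 a' b' c' d' =
  mx22 (a * a' + b * c') (a * b' + b * d') (c * a' + d * c') (c * b' + d * d').
Proof.
apply/matrixP => i j; rewrite !mxE !big_ord_recl big_ord0 !mxE /= addr0.
by case: i => -[|[|i]] Hi //; case: j => -[|[|j]] Hj.
Qed.

Lemma mx22_1 : mx22 1 0 0 1 = 1%:M.
Proof.
apply/matrixP => i j; rewrite !mxE.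
by case: i => -[|[|i]] Hi //; case: j => -[|[|j]] Hj.
Qed.

Lemma adj2_mx22 a b c d : adj2 (mx22 a b c d) = mx22 a^* c^* b^* d^*.
Proof.
apply/matrixP => i j; rewrite !mxE.
by case: i => -[|[|i]] Hi //; case: j => -[|[|j]] Hj.
Qed.

Lemma det_mx22 a b c d : \det (mx22 a b c d) = a * d - b * c.
Proof.
rewrite (expand_det_row _ 0) !big_ord_recl big_ord0 /cofactor !det_mx11 !mxE /=.
by rewrite /bump /=; ring.
Qed.

Lemma tr_mx22 a b c d : \tr (mx22 a b c d) = a + d.
Proof. by rewrite /mxtrace !big_ord_recl big_ord0 !mxE /= addr0. Qed.

(* The quaternion a + b i + c j + d k. *)
Definition quat (a b c d : R) : mat2 R :=
  mx22 (a +i* b) (c +i* d) ((- c) +i* d) (a +i* (- b)).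

Lemma quat_inj a b c d a' b' c' d' : quat a b c d = quat a' b' c' d' ->
  [/\ a = a', b = b', c = c' & d = d'].
Proof. by move=> /mx22_inj [[-> ->] [-> ->] _ _]. Qed.

Lemma quatM a b c d a' b' c' d' :
  quat a b c d * quat a' b' c' d' =
  quat (a * a' - b * b' - c * c' - d * d') (a * b' + b * a' + c * d' - d * c')
       (a * c' - b * d' + c * a' + d * b') (a * d' + b * c' - c * b' + d * a').
Proof. by rewrite /quat mx22M; simpc; congr mx22; congr Complex; ring. Qed.

Lemma quat1 : quat 1 0 0 0 = 1.
Proof. by rewrite /quat oppr0 mx22_1. Qed.

Lemma quat_SU2 a b c d : a ^+ 2 + b ^+ 2 + c ^+ 2 + d ^+ 2 = 1 -> SU2 (quat a b c d).
Proof.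
move=> norm1; split.
  rewrite mulmxE /quat adj2_mx22 mx22M -mx22_1; simpc.
  by congr mx22; congr Complex; rewrite -?norm1; ring.
rewrite /quat det_mx22; simpc; apply/eqP; rewrite eq_complex /=.
by apply/andP; split; apply/eqP; rewrite -?norm1; ring.
Qed.

Lemma SU2_quat (A : mat2 R) : SU2 A -> exists a b c d,
  A = quat a b c d /\ a ^+ 2 + b ^+ 2 + c ^+ 2 + d ^+ 2 = 1.
Proof.
rewrite /SU2 /= (mx22_eta A) adj2_mx22 det_mx22 mulmxE mx22M -mx22_1.
set a := A 0 0; set b := A 0 1; set c := A 1 0; set d := A 1 1.
move=> [/mx22_inj [row1 row12 _ _] det1].
have row21 : a^* * c + b^* * d = 0.
  by move: (congr1 (@conjc R) row12); rewrite rmorphD !rmorphM /= !conjcK oppr0.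
have -> : d = a^*.
  have : a^* * (a * d - b * c) - d * (a * a^* + b * b^*) = - b * (a^* * c + b^* * d) by ring.
  by rewrite det1 row1 row21 !mulr1 mulr0 => /eqP; rewrite subr_eq0 => /eqP.
have -> : c = - b^*.
  have : - b^* * (a * d - b * c) - c * (a * a^* + b * b^*) = - a * (a^* * c + b^* * d) by ring.
  by rewrite det1 row1 row21 !mulr1 mulr0 => /eqP; rewrite subr_eq0 => /eqP.
clearbody a b; move: row1 {row12 row21 det1}; case: a => a1 a2; case: b => b1 b2 row1.
exists a1, a2, b1, b2; split; first by rewrite /quat; simpc.
by move: (congr1 (@complex.Re R) row1) => /= <-; ring.
Qed.

Lemma SU2_unit (A : mat2 R) : SU2 A -> A \is a GRing.unit.
Proof.
by move=> [_ det1]; rewrite -[_ \is a _]/(_ \in unitmx) unitmxE det1 unitr1.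
Qed.

Definition half_trace (A : mat2 R) : R := complex.Re (\tr A) / 2.

Lemma half_trace_quat a b c d : half_trace (quat a b c d) = a.
Proof. by rewrite /half_trace /quat tr_mx22; simpc => /=; field. Qed.

Lemma half_trace_SU2 (A : mat2 R) : SU2 A -> -1 <= half_trace A <= 1.
Proof.
move=> /SU2_quat [a [b [c [d [-> norm1]]]]].
by rewrite half_trace_quat; apply/andP; split; nra.
Qed.

Lemma SU2_commute_half_trace (A B : mat2 R) : SU2 A -> SU2 B -> A * B = B * A ->
  (half_trace (A * B) - half_trace A * half_trace B) ^+ 2 =
  (1 - half_trace A ^+ 2) * (1 - half_trace B ^+ 2).
Proof.
move=> /SU2_quat [a [b [c [d [-> normA]]]]] /SU2_quat [a' [b' [c' [d' [-> normB]]]]].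
rewrite !quatM !half_trace_quat => /quat_inj [_ cross1 cross2 cross3].
(* Lagrange's identity; the cross product of the imaginary parts vanishes. *)
have : (b * b' + c * c' + d * d') ^+ 2 =
  (b ^+ 2 + c ^+ 2 + d ^+ 2) * (b' ^+ 2 + c' ^+ 2 + d' ^+ 2)
  - ((c * d' - d * c') ^+ 2 + (d * b' - b * d') ^+ 2 + (b * c' - c * b') ^+ 2) by ring.
have -> : c * d' - d * c' = 0 by lra.
have -> : d * b' - b * d' = 0 by lra.
have -> : b * c' - c * b' = 0 by lra.
rewrite expr0n /= !addr0 subr0 => lagrange.
have -> : 1 - a ^+ 2 = b ^+ 2 + c ^+ 2 + d ^+ 2 by rewrite -normA; ring.
have -> : 1 - a' ^+ 2 = b' ^+ 2 + c' ^+ 2 + d' ^+ 2 by rewrite -normB; ring.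
by rewrite -lagrange; ring.
Qed.

End SU2Quaternions.

Section Angles.
Variable R : realType.
Implicit Types a b x y z : R.

Lemma acos_cosB a b : 0 <= a <= pi -> 0 <= b <= pi ->
  acos (cos (a - b)) = a - b \/ acos (cos (a - b)) = b - a.
Proof.
move=> /andP [a_ge0 a_lepi] /andP [b_ge0 b_lepi].
have [b_lea | a_ltb] := leP b a.
  by left; rewrite cosK // in_itv /=; apply/andP; split; lra.
by right; rewrite cosKN ?opprB //; apply/andP; split; lra.
Qed.

Lemma acos_cosD a b : 0 <= a <= pi -> 0 <= b <= pi ->
  acos (cos (a + b)) = a + b \/ acos (cos (a + b)) = pi *+ 2 - (a + b).
Proof.
move=> /andP [a_ge0 a_lepi] /andP [b_ge0 b_lepi].
have [ab_lepi | pi_ltab] := leP (a + b) pi.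
  by left; rewrite cosK // in_itv /=; apply/andP; split; lra.
right; rewrite -[in LHS](subrK (pi *+ 2) (a + b)) cosD2pi cosKN ?opprB //.
by apply/andP; split; rewrite mulr2n; lra.
Qed.

Lemma acos_degenerate_triangle x y z : -1 <= x <= 1 -> -1 <= y <= 1 ->
  (z - x * y) ^+ 2 = (1 - x ^+ 2) * (1 - y ^+ 2) ->
  [\/ acos z = acos x + acos y, acos z = acos x - acos y,
      acos z = acos y - acos x | acos z = pi *+ 2 - (acos x + acos y)].
Proof.
move=> x_bd y_bd zxy.
have a_bd : 0 <= acos x <= pi by rewrite acos_ge0 ?acos_lepi.
have b_bd : 0 <= acos y <= pi by rewrite acos_ge0 ?acos_lepi.
have sin_acos2 u : -1 <= u <= 1 -> sin (acos u) ^+ 2 = 1 - u ^+ 2.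
  move=> u_bd; rewrite sin_acos // sqr_sqrtr // subr_ge0.
  by move: u_bd => /andP [? ?]; nra.
have : (z - x * y) ^+ 2 == (sin (acos x) * sin (acos y)) ^+ 2.
  by rewrite exprMn !sin_acos2 // zxy.
rewrite eqf_sqr => /orP [] /eqP /eqP; rewrite subr_eq => /eqP ->.
- have -> : sin (acos x) * sin (acos y) + x * y = cos (acos x - acos y).
    by rewrite cosB !acosK ?in_itv //; ring.
  by case: (acos_cosB a_bd b_bd) => ->; [constructor 2 | constructor 3].
- have -> : - (sin (acos x) * sin (acos y)) + x * y = cos (acos x + acos y).
    by rewrite cosD !acosK ?in_itv //; ring.
  by case: (acos_cosD a_bd b_bd) => ->; [constructor 1 | constructor 4].
Qed.

End Angles.

Section Tetrahedron.
Variable R : realType.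

Definition affine_form n (a : 'rV[R]_n) (c : R) (x : 'rV[R]_n) : R :=
  \sum_j a 0 j * x 0 j + c.

Lemma affine_form_interior_gt0 n (S : set 'rV[R]_n) a c x : a != 0 ->
  (forall y, S y -> 0 <= affine_form a c y) -> interior S x ->
  0 < affine_form a c x.
Proof.
move=> a_neq0 S_ge0 /nbhs_ballP [e /= e_gt0 xeS].
have a_gt0 : 0 < `|a| by rewrite normr_gt0.
set d := e / (2 * `|a|).
have d_gt0 : 0 < d by rewrite divr_gt0 ?mulr_gt0.
have : S (x - d *: a).
  apply: xeS; rewrite mx_norm_ball /ball_ /= opprB addrC subrK normrZ gtr0_norm //.
  by rewrite /d invfM mulrA mulfVK ?gt_eqF //; lra.
move=> /S_ge0; rewrite /affine_form.
under eq_bigr => j _ do rewrite !mxE mulrBr mulrCA.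
rewrite sumrB -mulr_sumr.
have sq_gt0 : 0 < \sum_j a 0 j * a 0 j.
  have sq_ge0 j : 0 <= a 0 j * a 0 j by rewrite -expr2 sqr_ge0.
  rewrite lt_def sumr_ge0 ?andbT //; apply: contra a_neq0 => /eqP sq0.
  apply/eqP/rowP => j; apply/eqP; rewrite mxE -[_ == 0]orbb -mulf_eq0.
  by rewrite (psumr_eq0P _ sq0).
by nra.
Qed.

Lemma affine_form_tDelta_ge0 a c x :
  (forall i, 0 <= affine_form a c (tvert R i)) -> @tDelta R x -> 0 <= affine_form a c x.
Proof.
move=> vert_ge0 [l [l_ge0 l_sum1 ->]].
have -> : affine_form a c (\sum_i l i *: tvert R i) = \sum_i l i * affine_form a c (tvert R i).
  rewrite /affine_form; under [RHS]eq_bigr do rewrite mulrDr mulr_sumr.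
  rewrite big_split /= -mulr_suml l_sum1 mul1r; congr (_ + _).
  under eq_bigr do rewrite summxE mulr_sumr.
  by rewrite exchange_big; apply: eq_bigr => i _; apply: eq_bigr => j _; rewrite mxE mulrCA.
by apply: sumr_ge0 => i _; apply: mulr_ge0.
Qed.

Lemma affine_form_pt3 a0 a1 a2 c x y z :
  affine_form (pt3 a0 a1 a2) c (pt3 x y z) = a0 * x + a1 * y + a2 * z + c.
Proof. by rewrite /affine_form !big_ord_recr big_ord0 /= !mxE /= add0r. Qed.

Lemma interior_tDelta_pt3 x y z : interior (@tDelta R) (pt3 x y z) ->
  [/\ z < x + y, y < x + z, x < y + z & x + y + z < 2].
Proof.
move=> int_xyz.
have facet a0 a1 a2 c : a0 != 0 -> 0 <= c -> 0 <= a1 + a2 + c ->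
    0 <= a0 + a2 + c -> 0 <= a0 + a1 + c -> 0 < a0 * x + a1 * y + a2 * z + c.
  move=> a0_neq0 v0 v1 v2 v3; rewrite -affine_form_pt3.
  apply: affine_form_interior_gt0 int_xyz.
    by apply: contra a0_neq0 => /eqP /rowP /(_ 0); rewrite !mxE /= => ->.
  move=> p; apply: affine_form_tDelta_ge0 => -[[|[|[|[|i]]]] i_lt4] //=;
    by rewrite affine_form_pt3; lra.
have [one_neq0 mone_neq0] : (1 : R) != 0 /\ (-1 : R) != 0.
  by rewrite oppr_eq0 oner_eq0.
split; [ move: (facet 1 1 (-1) 0 one_neq0) | move: (facet 1 (-1) 1 0 one_neq0)
       | move: (facet (-1) 1 1 0 mone_neq0) | move: (facet (-1) (-1) (-1) 2 mone_neq0)].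
all: lra.
Qed.

End Tetrahedron.

Section Quadruples.
Variable R : realType.

Lemma half_trace_conj (k A : mat2 R) : k \is a GRing.unit ->
  half_trace (k * A * k^-1) = half_trace A.
Proof.
by move=> k_unit; rewrite /half_trace -mulmxE mxtrace_mulC mulmxE mulrA mulVr ?mul1r.
Qed.

Lemma muq_conjq (k : mat2 R) q : k \is a GRing.unit -> muq (conjq k q) = muq q.
Proof.
move=> k_unit; rewrite /muq /conjq /qh1 /qh2 /= /fSU2 -!/(half_trace _).
by rewrite !mulrA divrK // -(mulrA k _ (qh2 q)) !half_trace_conj.
Qed.

Lemma qclass_refl (q : quad R) : qclass q q.
Proof.
exists 1; split; first by rewrite -quat1; apply: quat_SU2; lra.
by case: q => [[[? ?] ?] ?]; rewrite /conjq invr1 !mul1r !mulr1.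
Qed.

Lemma not_interior_tDelta_degenerate (a b c : R) :
  [\/ c = a + b, c = a - b, c = b - a | c = pi *+ 2 - (a + b)] ->
  ~ interior (@tDelta R) (pt3 (a / pi) (b / pi) (c / pi)).
Proof.
have pi_gt0 : (0 : R) < pi := pi_gt0 R.
have unscale (x : R) : x = x / pi * pi by rewrite divfK // gt_eqF.
move=> abc /interior_tDelta_pt3 [? ? ? ?].
by rewrite (unscale a) (unscale b) (unscale c) in abc; case: abc; nra.
Qed.

Lemma Mcirc_sub_Mirr : @Mcirc R `<=` @Mirr R.
Proof.
move=> _ [q [rel_q -> int_q]]; exists q; split => // ab_q.
have [_ SU2h1 _ SU2h2 _] := rel_q.
have h12 : qh1 q * qh2 q = qh2 q * qh1 q := ab_q (@Ordinal 4 1 isT) (@Ordinal 4 3 isT).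
move: int_q; apply: not_interior_tDelta_degenerate.
exact: acos_degenerate_triangle (half_trace_SU2 SU2h1) (half_trace_SU2 SU2h2)
  (SU2_commute_half_trace SU2h1 SU2h2 h12).
Qed.

Lemma Mirr_not_sub_Mcirc : ~ @Mirr R `<=` @Mcirc R.
Proof.
pose i := quat 0 1 0 0 : mat2 R; pose j := quat 0 0 1 0 : mat2 R.
have SU2i : SU2 i by apply: quat_SU2; lra.
have SU2j : SU2 j by apply: quat_SU2; lra.
have SU2_1 : SU2 (1 : mat2 R) by rewrite -quat1; apply: quat_SU2; lra.
have comm2_1 (A : mat2 R) : SU2 A -> comm2 A 1 = 1.
  by move=> /SU2_unit A_unit; rewrite /comm2 invr1 !mulr1 mulrV.
pose q0 : quad R := (i, 1, j, 1).
move=> /(_ (qclass q0)) Mirr_sub.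
have [q [_ class_q int_q]] : Mcirc (qclass q0).
  apply: Mirr_sub; exists q0; split => //.
    by split => //; rewrite /qg1 /qh1 /qg2 /qh2 /= !comm2_1 ?mulr1.
  move=> /(_ (@Ordinal 4 0 isT) (@Ordinal 4 2 isT)) /=.
  by rewrite /i /j !quatM => /quat_inj [_ _ _]; lra.
have [k [SU2k q_conj]] : qclass q0 q by rewrite class_q; exact: qclass_refl.
have f1 : fSU2 (1 : mat2 R) = 0.
  by rewrite /fSU2 -/(half_trace 1) -quat1 half_trace_quat acos1 mul0r.
move: int_q; rewrite q_conj muq_conjq ?SU2_unit // /muq /= mulr1 f1.
by move=> /interior_tDelta_pt3 [+ _ _ _]; rewrite addr0 ltxx.
Qed.

End Quadruples.

Theorem mainTheorem6 (R : realType) : @Mcirc R `<` @Mirr R.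
Proof. by split; [exact: Mcirc_sub_Mirr | exact: Mirr_not_sub_Mcirc]. Qed.
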